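(* Let $m_1,m_2\ge1$, let $k_1,k_2\ge0$ be integers and $r_1,r_2>0$ with $r_1^2+r_2^2=1$. Let $F_1:\mathbb{R}^{m_1+1}\to\mathbb{R}^{n_1+1}$ and $F_2:\mathbb{R}^{m_2+1}\to\mathbb{R}^{n_2+1}$ be harmonic forms of degrees $k_1$, $k_2$ (each component a harmonic homogeneous polynomial of that degree) with $|F_1(\bar x)|^2=r_1^2|\bar x|^{2k_1}$ on $\mathbb{R}^{m_1+1}$ and $|F_2(\bar y)|^2=r_2^2|\bar y|^{2k_2}$ on $\mathbb{R}^{m_2+1}$, restricting to $\varphi_1:\mathbb{S}^{m_1}\to\mathbb{S}^{n_1}(r_1)$ and $\varphi_2:\mathbb{S}^{m_2}\to\mathbb{S}^{n_2}(r_2)$. Let $\varphi=\iota\circ(\varphi_1,\varphi_2):\mathbb{S}^{m_1}\times\mathbb{S}^{m_2}\to\mathbb{S}^{n_1+n_2+1}$, $\varphi(x,y)=(\varphi_1(x),\varphi_2(y))$, where $\mathbb{S}^{m_1}\times\mathbb{S}^{m_2}$ carries the product metric and $\iota$ is the canonical inclusion of $\mathbb{S}^{n_1}(r_1)\times\mathbb{S}^{n_2}(r_2)$ into $\mathbb{S}^{n_1+n_2+1}$. Then $\varphi$ is proper biharmonic if and only if $r_1=r_2=1/\sqrt2$ and $e(\varphi_1)\neq e(\varphi_2)$.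
   Context: $\mathbb{S}^m$ is the unit sphere in $\mathbb{R}^{m+1}$, $\mathbb{S}^n(r)$ the sphere of radius $r$ centred at $0$. Energy density $e(\psi)=\frac12|d\psi|^2$ (here constant). Proper biharmonic means vanishing bitension field $\tau_2(\varphi)=-\Delta\tau(\varphi)-\operatorname{trace}R^N(d\varphi\cdot,\tau(\varphi))d\varphi\cdot$ (with $\Delta=-\operatorname{trace}\nabla^2$) but nonvanishing tension field $\tau(\varphi)=\operatorname{trace}\nabla d\varphi$. *)

From Stdlib Require Import Reals Lra List.
From Coquelicot Require Import Coquelicot.
Open Scope R_scope.

(** Points/vectors of R^d are represented as [nat -> R]; only the coordinates
    [0 .. d-1] are ever used. *)
Definition vec := nat -> R.

Fixpoint sumR (n : nat) (f : nat -> R) : R :=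
  match n with O => 0 | S n' => sumR n' f + f n' end.
Fixpoint prodR (n : nat) (f : nat -> R) : R :=
  match n with O => 1 | S n' => prodR n' f * f n' end.
Fixpoint sumN (n : nat) (f : nat -> nat) : nat :=
  match n with O => O | S n' => (sumN n' f + f n')%nat end.

Definition vzero : vec := fun _ => 0.
Definition dot (d : nat) (u v : vec) : R := sumR d (fun i => u i * v i).
Definition sqnorm (d : nat) (u : vec) : R := dot d u u.
Definition basis (j : nat) : vec := fun i => if Nat.eqb i j then 1 else 0.
Definition on_sphere (d : nat) (x : vec) : Prop := sqnorm d x = 1.

Definition proj (d : nat) (x w : vec) : vec := fun i => w i - dot d x w * x i.

(** Geodesic of the unit sphere in R^d through x with initial velocity u
    (u tangent at x). *)
Definition geo (d : nat) (x u : vec) (t : R) : vec :=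
  fun i => cos (sqrt (sqnorm d u) * t) * x i
           + sin (sqrt (sqnorm d u) * t) / sqrt (sqnorm d u) * u i.

Definition monomial (d : nat) (a : nat -> nat) (x : vec) : R :=
  prodR d (fun i => x i ^ a i).

Definition is_hom_poly (d k : nat) (f : vec -> R) : Prop :=
  exists cs : list (R * (nat -> nat)),
    (forall ca, In ca cs -> sumN d (snd ca) = k) /\
    forall x, f x = fold_right (fun ca acc => fst ca * monomial d (snd ca) x + acc) 0 cs.

Definition is_harmonic (d : nat) (f : vec -> R) : Prop :=
  forall x : vec,
    sumR d (fun i => Derive_n (fun t => f (fun l => if Nat.eqb l i then x l + t else x l)) 2 0) = 0.

Definition harmonic_form (d n k : nat) (F : vec -> vec) : Prop :=
  forall j, (j < n)%nat -> is_hom_poly d k (fun x => F x j) /\ is_harmonic d (fun x => F x j).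

Definition energy_density (d n : nat) (F : vec -> vec) (x : vec) : R :=
  / 2 * sumR d (fun i =>
     sqnorm n (fun j => Derive (fun t => F (geo d x (proj d x (basis i)) t) j) 0)).

(** Trace over T_{(x,y)}(S x S) of a vector-valued quadratic form Q(u,v):
    sum over the orthogonal projections of the ambient standard basis. *)
Definition trM (d1 d2 : nat) (x y : vec) (Q : vec -> vec -> vec) : vec :=
  fun j => sumR d1 (fun i => Q (proj d1 x (basis i)) vzero j)
         + sumR d2 (fun i => Q vzero (proj d2 y (basis i)) j).

Definition dmap (d1 d2 : nat) (Phi : vec -> vec -> vec) (x y u v : vec) : vec :=
  fun j => Derive (fun t => Phi (geo d1 x u t) (geo d2 y v t) j) 0.

(** tension field tau(Phi) = trace nabla dPhi; along a geodesic gamma,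
    (nabla dPhi)(gamma',gamma') = P (d^2/dt^2 Phi(gamma)). *)
Definition tension (dT d1 d2 : nat) (Phi : vec -> vec -> vec) (x y : vec) : vec :=
  proj dT (Phi x y)
    (trM d1 d2 x y (fun u v j => Derive_n (fun t => Phi (geo d1 x u t) (geo d2 y v t) j) 2 0)).

(** second covariant derivative (nabla^2 V)((u,v),(u,v)) of a section V along Phi,
    computed along the geodesic with initial velocity (u,v). *)
Definition hess_sec (dT d1 d2 : nat) (Phi V : vec -> vec -> vec) (x y u v : vec) : vec :=
  let W := fun t => proj dT (Phi (geo d1 x u t) (geo d2 y v t))
                      (fun j => Derive (fun s => V (geo d1 x u s) (geo d2 y v s) j) t) in
  proj dT (Phi x y) (fun j => Derive (fun t => W t j) 0).

(** rough Laplacian, Delta = - trace nabla^2 *)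
Definition rough_lap (dT d1 d2 : nat) (Phi V : vec -> vec -> vec) (x y : vec) : vec :=
  fun j => - trM d1 d2 x y (hess_sec dT d1 d2 Phi V x y) j.

(** trace R^N(dPhi ., tau) dPhi . for the unit sphere, with
    R(X,Y)Z = <Y,Z>X - <X,Z>Y *)
Definition curv_trace (dT d1 d2 : nat) (Phi : vec -> vec -> vec) (x y : vec) : vec :=
  let tau := tension dT d1 d2 Phi x y in
  trM d1 d2 x y (fun u v j =>
    let w := dmap d1 d2 Phi x y u v in dot dT tau w * w j - sqnorm dT w * tau j).

Definition bitension (dT d1 d2 : nat) (Phi : vec -> vec -> vec) (x y : vec) : vec :=
  fun j => - rough_lap dT d1 d2 Phi (tension dT d1 d2 Phi) x y j
           - curv_trace dT d1 d2 Phi x y j.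

Definition proper_biharmonic (dT d1 d2 : nat) (Phi : vec -> vec -> vec) : Prop :=
  (forall x y, on_sphere d1 x -> on_sphere d2 y ->
     forall j, (j < dT)%nat -> bitension dT d1 d2 Phi x y j = 0) /\
  (exists x y, on_sphere d1 x /\ on_sphere d2 y /\
     exists j, (j < dT)%nat /\ tension dT d1 d2 Phi x y j <> 0).

(** iota o (phi1, phi2) : (x,y) |-> (F1 x, F2 y) in R^{n1+1} x R^{n2+1} *)
Definition prod_map (n1 : nat) (F1 F2 : vec -> vec) (x y : vec) : vec :=
  fun j => if Nat.ltb j (S n1) then F1 x j else F2 y (j - S n1)%nat.

From Stdlib Require Import Reals Lra Lia List FunctionalExtensionality.
From Coquelicot Require Import Coquelicot.
Open Scope R_scope.

(* Each component of F_i is a harmonic homogeneous polynomial of degree k_i, hence on the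
   sphere an eigenfunction of the Laplacian with eigenvalue λ_i = k_i (k_i + m_i - 1): Euler's
   identities compute the radial part of the Euclidean Laplacian.  Differentiating
   |F_i|^2 = r_i^2 twice along geodesics shows that dF_i is orthogonal to F_i and gives
   e(φ_i) = λ_i r_i^2 / 2.  With r_1^2 + r_2^2 = 1 one finds
     τ(φ)   = ((λ_2 - λ_1) r_2^2 F_1, (λ_1 - λ_2) r_1^2 F_2),
     τ_2(φ) = (λ_1 - λ_2)^2 (r_2^2 (r_2^2 - r_1^2) F_1, r_1^2 (r_1^2 - r_2^2) F_2),
   so φ is proper biharmonic iff λ_1 ≠ λ_2 and r_1 = r_2 = 1/√2, and for r_1 = r_2 the
   condition λ_1 ≠ λ_2 says exactly e(φ_1) ≠ e(φ_2). *)

(** * Finite sums *)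

Lemma sumR_ext n f g : (forall i, (i < n)%nat -> f i = g i) -> sumR n f = sumR n g.
Proof.
  induction n as [|n IH]; intros H; simpl; [reflexivity|].
  rewrite IH, H; [reflexivity|lia|intros; apply H; lia].
Qed.

Lemma sumR_add n f g : sumR n (fun i => f i + g i) = sumR n f + sumR n g.
Proof. induction n; simpl; [lra|]. rewrite IHn; ring. Qed.

Lemma sumR_sub n f g : sumR n (fun i => f i - g i) = sumR n f - sumR n g.
Proof. induction n; simpl; [lra|]. rewrite IHn; ring. Qed.

Lemma sumR_mull n c f : sumR n (fun i => c * f i) = c * sumR n f.
Proof. induction n; simpl; [lra|]. rewrite IHn; ring. Qed.

Lemma sumR_mulr n c f : sumR n (fun i => f i * c) = sumR n f * c.
Proof. induction n; simpl; [lra|]. rewrite IHn; ring. Qed.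

Lemma sumR_const n c : sumR n (fun _ => c) = INR n * c.
Proof. induction n; simpl sumR; [simpl; lra|]. rewrite IHn, S_INR; ring. Qed.

Lemma sumR_0 n : sumR n (fun _ => 0) = 0.
Proof. rewrite sumR_const; ring. Qed.

Lemma sumR_swap n m (f : nat -> nat -> R) :
  sumR n (fun i => sumR m (fun j => f i j)) = sumR m (fun j => sumR n (fun i => f i j)).
Proof.
  induction n; simpl; [now rewrite sumR_0|].
  now rewrite IHn, <- sumR_add.
Qed.

Lemma sumR_split a b f : sumR (a + b) f = sumR a f + sumR b (fun j => f (a + j)%nat).
Proof.
  induction b; simpl; [rewrite Nat.add_0_r; ring|].
  rewrite Nat.add_succ_r; simpl. rewrite IHb; ring.
Qed.

Lemma sumR_basis n i g : (i < n)%nat -> sumR n (fun l => g l * basis i l) = g i.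
Proof.
  induction n as [|n IH]; intros Hi; [lia|]. simpl. unfold basis at 2.
  destruct (Nat.eqb_spec n i) as [<-|Hn].
  - rewrite (sumR_ext _ _ (fun _ => 0)), sumR_0; [ring|].
    intros l Hl. unfold basis. destruct (Nat.eqb_spec l n); [lia|ring].
  - rewrite IH by lia. ring.
Qed.

Lemma sumR_ge0 n f : (forall i, (i < n)%nat -> 0 <= f i) -> 0 <= sumR n f.
Proof.
  induction n; simpl; intros H; [lra|].
  assert (0 <= sumR n f) by (apply IHn; intros; apply H; lia).
  assert (0 <= f n) by (apply H; lia). lra.
Qed.

Lemma is_derive_sumR n (f f' : nat -> R -> R) t :
  (forall j, (j < n)%nat -> is_derive (f j) t (f' j t)) ->
  is_derive (fun s => sumR n (fun j => f j s)) t (sumR n (fun j => f' j t)).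
Proof.
  induction n; intros H; simpl; [exact (is_derive_const 0 t)|].
  apply (is_derive_plus (fun s => sumR n (fun j => f j s)) (f n));
    [apply IHn; intros; apply H|apply H]; lia.
Qed.

(** * Polynomials as terms *)

(* Polynomials are reified as terms, so that their derivatives along curves follow from a
   formal chain rule; [pdiff d p x v] is dp_x(v) and [phess d p x v w] is d^2p_x(v, w). *)
Inductive pterm : Type :=
  | PConst (c : R) | PVar (l : nat) | PAdd (p q : pterm) | PMul (p q : pterm).

Fixpoint peval (x : vec) (p : pterm) : R :=
  match p with
  | PConst c => c
  | PVar l => x l
  | PAdd p q => peval x p + peval x q
  | PMul p q => peval x p * peval x q
  end.

Fixpoint pderiv (l : nat) (p : pterm) : pterm :=
  match p with
  | PConst _ => PConst 0
  | PVar l' => PConst (basis l' l)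
  | PAdd p q => PAdd (pderiv l p) (pderiv l q)
  | PMul p q => PAdd (PMul (pderiv l p) q) (PMul p (pderiv l q))
  end.

Fixpoint pvars_below (d : nat) (p : pterm) : Prop :=
  match p with
  | PConst _ => True
  | PVar l => (l < d)%nat
  | PAdd p q | PMul p q => pvars_below d p /\ pvars_below d q
  end.

Lemma pvars_below_pderiv d l p : pvars_below d p -> pvars_below d (pderiv l p).
Proof. induction p; simpl; tauto. Qed.

Definition pdiff (d : nat) (p : pterm) (x v : vec) : R :=
  sumR d (fun l => v l * peval x (pderiv l p)).

Definition phess (d : nat) (p : pterm) (x v w : vec) : R :=
  sumR d (fun l => v l * pdiff d (pderiv l p) x w).

Lemma pdiff_ext d p x v w : (forall l, (l < d)%nat -> v l = w l) -> pdiff d p x v = pdiff d p x w.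
Proof. intros H. apply sumR_ext; intros l Hl. now rewrite H. Qed.

Lemma pdiff_scal d p x c v : pdiff d p x (fun l => c * v l) = c * pdiff d p x v.
Proof. unfold pdiff. rewrite <- sumR_mull. apply sumR_ext; intros; ring. Qed.

Lemma pdiff_vzero d p x : pdiff d p x vzero = 0.
Proof. unfold pdiff, vzero. rewrite (sumR_ext _ _ (fun _ => 0)), sumR_0 by (intros; ring). reflexivity. Qed.

Lemma pdiff_sub d p y w w' s :
  pdiff d p y (fun l => w l - s * w' l) = pdiff d p y w - s * pdiff d p y w'.
Proof. unfold pdiff. rewrite <- sumR_mull, <- sumR_sub. apply sumR_ext; intros; ring. Qed.

Lemma pdiff_basis d p y i : (i < d)%nat -> pdiff d p y (basis i) = peval y (pderiv i p).
Proof.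
  intros Hi. unfold pdiff. rewrite <- (sumR_basis d i (fun l => peval y (pderiv l p))) by exact Hi.
  apply sumR_ext; intros; ring.
Qed.

Lemma phess_ext d p x v v' w w' :
  (forall l, (l < d)%nat -> v l = v' l) -> (forall l, (l < d)%nat -> w l = w' l) ->
  phess d p x v w = phess d p x v' w'.
Proof.
  intros Hv Hw. apply sumR_ext; intros l Hl. rewrite Hv by exact Hl. f_equal. now apply pdiff_ext.
Qed.

Lemma phess_sub_l d p y v v' w s :
  phess d p y (fun l => v l - s * v' l) w = phess d p y v w - s * phess d p y v' w.
Proof. unfold phess. rewrite <- sumR_mull, <- sumR_sub. apply sumR_ext; intros; ring. Qed.

Lemma phess_sub_r d p y v w w' s :
  phess d p y v (fun l => w l - s * w' l) = phess d p y v w - s * phess d p y v w'.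
Proof.
  unfold phess. rewrite <- sumR_mull, <- sumR_sub. apply sumR_ext; intros. rewrite pdiff_sub. ring.
Qed.

Lemma sumR_phess_basis_l d p y z w :
  sumR d (fun i => z i * phess d p y (basis i) w) = phess d p y z w.
Proof.
  apply sumR_ext; intros i Hi. f_equal. unfold phess.
  rewrite <- (sumR_basis d i (fun l => pdiff d (pderiv l p) y w)) by exact Hi.
  apply sumR_ext; intros; ring.
Qed.

Lemma sumR_phess_basis_r d p y z w :
  sumR d (fun i => z i * phess d p y w (basis i)) = phess d p y w z.
Proof.
  unfold phess. rewrite (sumR_ext _ _ (fun i => sumR d (fun l => w l * (z i * peval y (pderiv i (pderiv l p)))))).
  - rewrite sumR_swap. apply sumR_ext; intros l Hl. rewrite sumR_mull. reflexivity.
  - intros i Hi. rewrite <- sumR_mull. apply sumR_ext; intros l Hl. rewrite pdiff_basis by exact Hi. ring.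
Qed.

Lemma is_derive_peval d p (c c' : R -> vec) t :
  pvars_below d p -> (forall l, (l < d)%nat -> is_derive (fun s => c s l) t (c' t l)) ->
  is_derive (fun s => peval (c s) p) t (pdiff d p (c t) (c' t)).
Proof.
  intros Hp Hc. unfold pdiff. induction p as [a|l|p IHp q IHq|p IHp q IHq]; simpl in *.
  - rewrite (sumR_ext _ _ (fun _ => 0)), sumR_0 by (intros; ring). exact (is_derive_const a t).
  - rewrite sumR_basis by exact Hp. now apply Hc.
  - destruct Hp as [Hp Hq].
    rewrite (sumR_ext _ _ (fun l => c' t l * peval (c t) (pderiv l p) + c' t l * peval (c t) (pderiv l q)))
      by (intros; ring).
    rewrite sumR_add. now apply (is_derive_plus (fun s => peval (c s) p) (fun s => peval (c s) q)); auto.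
  - destruct Hp as [Hp Hq].
    replace (sumR d _) with (sumR d (fun l => c' t l * peval (c t) (pderiv l p)) * peval (c t) q
                            + peval (c t) p * sumR d (fun l => c' t l * peval (c t) (pderiv l q))).
    2:{ rewrite <- sumR_mull, <- sumR_mulr, <- sumR_add. apply sumR_ext; intros; ring. }
    exact (is_derive_mult (fun s => peval (c s) p) (fun s => peval (c s) q) t _ _ (IHp Hp) (IHq Hq) Rmult_comm).
Qed.

Lemma is_derive_pdiff d p (c c' c'' : R -> vec) t :
  pvars_below d p ->
  (forall s l, (l < d)%nat -> is_derive (fun s => c s l) s (c' s l)) ->
  (forall l, (l < d)%nat -> is_derive (fun s => c' s l) t (c'' t l)) ->
  is_derive (fun s => pdiff d p (c s) (c' s)) t
    (pdiff d p (c t) (c'' t) + phess d p (c t) (c' t) (c' t)).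
Proof.
  intros Hp Hc Hc'. unfold pdiff at 2, phess. rewrite <- sumR_add.
  apply (is_derive_sumR d (fun l s => c' s l * peval (c s) (pderiv l p))
           (fun l s => c'' s l * peval (c s) (pderiv l p) + c' s l * pdiff d (pderiv l p) (c s) (c' s))).
  intros l Hl. apply (is_derive_mult (fun s => c' s l) (fun s => peval (c s) (pderiv l p)));
    [now apply Hc'| |exact Rmult_comm].
  apply is_derive_peval; [now apply pvars_below_pderiv|]. intros; now apply Hc.
Qed.

Definition twice_differentiable (g : R -> R) : Prop :=
  (forall t, ex_derive g t) /\ (forall t, ex_derive (Derive g) t).

Section ExplicitDerivatives.
Variables (g g1 g2 : R -> R).
Hypothesis Hg : forall t, is_derive g t (g1 t).
Hypothesis Hg1 : forall t, is_derive g1 t (g2 t).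

Lemma twice_differentiable_is_derive : twice_differentiable g.
Proof.
  split; intros t; [now exists (g1 t)|].
  exists (g2 t). apply (is_derive_ext g1); [|apply Hg1].
  intros s. symmetry. now apply is_derive_unique.
Qed.

Lemma Derive_n_2_is_derive t : Derive_n g 2 t = g2 t.
Proof.
  simpl. rewrite (Derive_ext _ g1) by (intros; now apply is_derive_unique).
  now apply is_derive_unique.
Qed.
End ExplicitDerivatives.

Section PolynomialAlongCurve.
Variables (d : nat) (p : pterm) (c c' c'' : R -> vec).
Hypothesis Hp : pvars_below d p.
Hypothesis Hc : forall t l, (l < d)%nat -> is_derive (fun s => c s l) t (c' t l).
Hypothesis Hc' : forall t l, (l < d)%nat -> is_derive (fun s => c' s l) t (c'' t l).

Lemma peval_curve_twice_differentiable : twice_differentiable (fun t => peval (c t) p).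
Proof.
  apply (twice_differentiable_is_derive _ (fun t => pdiff d p (c t) (c' t))
           (fun t => pdiff d p (c t) (c'' t) + phess d p (c t) (c' t) (c' t)));
    intros t; [apply is_derive_peval|apply is_derive_pdiff]; auto.
Qed.

Lemma Derive_n_2_peval_curve t :
  Derive_n (fun s => peval (c s) p) 2 t = pdiff d p (c t) (c'' t) + phess d p (c t) (c' t) (c' t).
Proof.
  apply (Derive_n_2_is_derive _ (fun t => pdiff d p (c t) (c' t))
           (fun t => pdiff d p (c t) (c'' t) + phess d p (c t) (c' t) (c' t)));
    intros s; [apply is_derive_peval|apply is_derive_pdiff]; auto.
Qed.
End PolynomialAlongCurve.

Fixpoint ppow (q : pterm) (n : nat) : pterm :=
  match n with O => PConst 1 | S n => PMul (ppow q n) q end.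
Fixpoint pmonomial (d : nat) (a : nat -> nat) : pterm :=
  match d with O => PConst 1 | S d' => PMul (pmonomial d' a) (ppow (PVar d') (a d')) end.
Definition plist (d : nat) (cs : list (R * (nat -> nat))) : pterm :=
  fold_right (fun ca acc => PAdd (PMul (PConst (fst ca)) (pmonomial d (snd ca))) acc) (PConst 0) cs.

Lemma peval_pmonomial y d a : peval y (pmonomial d a) = monomial d a y.
Proof.
  unfold monomial. induction d; simpl; [reflexivity|]. rewrite IHd. f_equal.
  induction (a d) as [|e IH]; simpl; [reflexivity|]. now rewrite IH, Rmult_comm.
Qed.

Lemma pvars_below_pmonomial d a : pvars_below d (pmonomial d a).
Proof.
  enough (H : forall d', (d' <= d)%nat -> pvars_below d (pmonomial d' a)) by auto.
  induction d'; simpl; intros Hd; [exact I|]. split; [apply IHd'; lia|].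
  induction (a d'); simpl; [exact I|]. split; [assumption|lia].
Qed.

Lemma monomial_scal d a s y : monomial d a (fun l => s * y l) = s ^ sumN d a * monomial d a y.
Proof.
  unfold monomial. induction d; simpl; [ring|]. rewrite IHd, pow_add, Rpow_mult_distr. ring.
Qed.

Lemma hom_poly_pterm d k f : is_hom_poly d k f ->
  exists p, pvars_below d p /\ (forall y, f y = peval y p) /\
            (forall s y, peval (fun l => s * y l) p = s ^ k * peval y p).
Proof.
  intros [cs [Hdeg Hf]]. exists (plist d cs). split; [|split].
  - clear Hf Hdeg. induction cs; simpl; auto using pvars_below_pmonomial.
  - intros y. rewrite Hf. clear Hf Hdeg. induction cs; simpl; [reflexivity|].
    now rewrite IHcs, peval_pmonomial.
  - intros s y. clear Hf. induction cs as [|ca cs IH]; simpl; [ring|].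
    rewrite IH by (intros; apply Hdeg; simpl; auto).
    rewrite !peval_pmonomial, monomial_scal, Hdeg by (simpl; auto). ring.
Qed.

Lemma is_derive_ray (x : vec) (t : R) (l : nat) : is_derive (fun s => s * x l) t (x l).
Proof. auto_derive; auto; ring. Qed.

Section Euler.
Variables (d k : nat) (p : pterm).
Hypothesis Hp : pvars_below d p.
Hypothesis Hhom : forall s y, peval (fun l => s * y l) p = s ^ k * peval y p.

Lemma euler_pdiff x : pdiff d p x x = INR k * peval x p.
Proof.
  assert (H1 := is_derive_peval d p (fun s l => s * x l) (fun _ => x) 1 Hp (fun l _ => is_derive_ray x 1 l)).
  cbv beta in H1. replace (fun l => 1 * x l) with x in H1 by (apply functional_extensionality; intros; ring).
  assert (H2 : is_derive (fun s => peval (fun l => s * x l) p) 1 (INR k * peval x p)).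
  { apply (is_derive_ext (fun s => s ^ k * peval x p)); [intros; symmetry; apply Hhom|].
    auto_derive; auto. rewrite pow1; ring. }
  now rewrite <- (is_derive_unique _ _ _ H1), (is_derive_unique _ _ _ H2).
Qed.

Lemma euler_phess x : phess d p x x x = INR k * (INR k - 1) * peval x p.
Proof.
  assert (H := Derive_n_2_peval_curve d p (fun s l => s * x l) (fun _ => x) (fun _ => vzero) Hp
                 (fun t l _ => is_derive_ray x t l) (fun t l _ => is_derive_const (x l) t) 1).
  cbv beta in H. replace (fun l => 1 * x l) with x in H by (apply functional_extensionality; intros; ring).
  rewrite pdiff_vzero, Rplus_0_l in H. rewrite <- H.
  rewrite (Derive_n_ext _ (fun s => s ^ k * peval x p)) by (intros; apply Hhom).
  rewrite (Derive_n_2_is_derive _ (fun s => INR k * s ^ pred k * peval x p)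
             (fun s => INR k * (INR (pred k) * s ^ pred (pred k)) * peval x p)).
  - rewrite !pow1. destruct k as [|k']; [simpl; ring|]. simpl pred. rewrite (S_INR k'). ring.
  - intros s. auto_derive; auto. ring.
  - intros s. auto_derive; auto. ring.
Qed.
End Euler.

(** * Vectors, tangent projections and geodesics of the sphere *)

Lemma dot_ext d u u' v v' : (forall j, (j < d)%nat -> u j = u' j) -> (forall j, (j < d)%nat -> v j = v' j) ->
  dot d u v = dot d u' v'.
Proof. intros Hu Hv. apply sumR_ext; intros j Hj. now rewrite Hu, Hv. Qed.

Lemma dot_scal_r n u c v : dot n u (fun j => c * v j) = c * dot n u v.
Proof. unfold dot. rewrite <- sumR_mull. apply sumR_ext; intros; ring. Qed.

Lemma dot_scal_l n u c v : dot n (fun j => c * u j) v = c * dot n u v.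
Proof. unfold dot. rewrite <- sumR_mull. apply sumR_ext; intros; ring. Qed.

Lemma dot_basis d x i : (i < d)%nat -> dot d x (basis i) = x i.
Proof. apply sumR_basis. Qed.

Lemma sqnorm_ge0 d u : 0 <= sqnorm d u.
Proof. apply sumR_ge0. intros; nra. Qed.

Lemma sqnorm_eq0 d u l : sqnorm d u = 0 -> (l < d)%nat -> u l = 0.
Proof.
  revert l. induction d as [|d IH]; intros l Hu Hl; [lia|]. unfold sqnorm, dot in *; simpl in Hu.
  assert (0 <= sumR d (fun i => u i * u i)) by (apply sumR_ge0; intros; nra).
  destruct (Nat.eq_dec l d) as [->|Hld]; [nra|]. apply IH; [nra|lia].
Qed.

Lemma sqnorm_vzero d : sqnorm d vzero = 0.
Proof. unfold sqnorm, dot, vzero. rewrite (sumR_ext _ _ (fun _ => 0)), sumR_0 by (intros; ring). reflexivity. Qed.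

Lemma dot_vzero_r d x : dot d x vzero = 0.
Proof. unfold dot, vzero. rewrite (sumR_ext _ _ (fun _ => 0)), sumR_0 by (intros; ring). reflexivity. Qed.

Lemma sqnorm_basis d i : (i < d)%nat -> sqnorm d (basis i) = 1.
Proof. intros Hi. unfold sqnorm. rewrite dot_basis by exact Hi. unfold basis. now rewrite Nat.eqb_refl. Qed.

Lemma sqnorm_neq0_coord n v : sqnorm n v <> 0 -> exists j, (j < n)%nat /\ v j <> 0.
Proof.
  induction n as [|n IH]; intros Hv; [now contradict Hv|]. unfold sqnorm, dot in *; simpl in Hv.
  destruct (Req_dec (v n) 0) as [Hn|Hn].
  - destruct IH as [j [Hj Hvj]]; [rewrite Hn, Rmult_0_l, Rplus_0_r in Hv; exact Hv|].
    exists j. split; [lia|exact Hvj].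
  - exists n. split; [lia|exact Hn].
Qed.

Lemma proj_basis d x i l : (i < d)%nat -> proj d x (basis i) l = basis i l - x i * x l.
Proof. intros Hi. unfold proj. now rewrite dot_basis. Qed.

Lemma proj_ext N z w w' : (forall j, (j < N)%nat -> w j = w' j) ->
  forall j, (j < N)%nat -> proj N z w j = proj N z w' j.
Proof. intros H j Hj. unfold proj. now rewrite H, (dot_ext N _ z _ w'). Qed.

Lemma dot_proj d x w : sqnorm d x = 1 -> dot d x (proj d x w) = 0.
Proof.
  intros Hx. unfold proj, dot. unfold sqnorm, dot in Hx.
  rewrite (sumR_ext _ _ (fun i => x i * w i - sumR d (fun i => x i * w i) * (x i * x i))) by (intros; ring).
  rewrite sumR_sub, sumR_mull, Hx. ring.
Qed.

Lemma sqnorm_proj_basis d x i : (i < d)%nat -> sqnorm d x = 1 ->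
  sqnorm d (proj d x (basis i)) = 1 - x i * x i.
Proof.
  intros Hi Hx. unfold sqnorm, dot in *.
  rewrite (sumR_ext _ _ (fun l => basis i l * basis i l - (2 * x i) * (x l * basis i l) + (x i * x i) * (x l * x l)))
    by (intros; rewrite proj_basis by exact Hi; ring).
  rewrite sumR_add, sumR_sub, !sumR_mull, Hx, !sumR_basis by exact Hi.
  unfold basis. rewrite Nat.eqb_refl. ring.
Qed.

Definition geo_vel (d : nat) (x u : vec) (t : R) : vec :=
  fun l => let a := sqrt (sqnorm d u) in - a * sin (a * t) * x l + cos (a * t) * u l.

Definition geo_acc (d : nat) (x u : vec) (t : R) : vec :=
  fun l => let a := sqrt (sqnorm d u) in - (a * a) * cos (a * t) * x l - a * sin (a * t) * u l.

Lemma is_derive_geo d x u t l : (l < d)%nat -> is_derive (fun s => geo d x u s l) t (geo_vel d x u t l).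
Proof.
  intros Hl. unfold geo, geo_vel. set (a := sqrt (sqnorm d u)).
  destruct (Req_dec a 0) as [Ha|Ha].
  - assert (Hu : u l = 0).
    { apply (sqnorm_eq0 d); [|exact Hl]. apply sqrt_eq_0; [apply sqnorm_ge0|exact Ha]. }
    rewrite Hu. auto_derive; auto. ring.
  - auto_derive; auto. field. exact Ha.
Qed.

Lemma is_derive_geo_vel d x u t l : is_derive (fun s => geo_vel d x u s l) t (geo_acc d x u t l).
Proof. unfold geo_vel, geo_acc. auto_derive; auto. ring. Qed.

Lemma geo_at_0 d x u : geo d x u 0 = x.
Proof.
  apply functional_extensionality; intros l. unfold geo.
  rewrite Rmult_0_r, cos_0, sin_0. unfold Rdiv. ring.
Qed.

Lemma geo_vel_at_0 d x u l : geo_vel d x u 0 l = u l.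
Proof. unfold geo_vel. rewrite Rmult_0_r, cos_0, sin_0. ring. Qed.

Lemma geo_acc_at_0 d x u l : geo_acc d x u 0 l = - sqnorm d u * x l.
Proof.
  unfold geo_acc. rewrite Rmult_0_r, cos_0, sin_0, sqrt_sqrt by apply sqnorm_ge0. ring.
Qed.

Lemma geo_vzero d x : geo d x vzero = fun _ => x.
Proof.
  apply functional_extensionality; intros t. apply functional_extensionality; intros l. unfold geo.
  rewrite sqnorm_vzero, sqrt_0, Rmult_0_l, cos_0. unfold vzero. ring.
Qed.

Lemma geo_on_sphere d x u t : sqnorm d x = 1 -> dot d x u = 0 -> sqnorm d (geo d x u t) = 1.
Proof.
  intros Hx Hu. unfold geo. set (a := sqrt (sqnorm d u)).
  set (C := cos (a * t)). set (Sa := sin (a * t) / a).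
  assert (Ha : a * a = sqnorm d u) by (apply sqrt_sqrt, sqnorm_ge0).
  unfold sqnorm, dot in *.
  rewrite (sumR_ext _ _ (fun l => (C * C) * (x l * x l) + (2 * C * Sa) * (x l * u l) + (Sa * Sa) * (u l * u l)))
    by (intros; ring).
  rewrite !sumR_add, !sumR_mull, Hx, Hu, <- Ha.
  destruct (Req_dec a 0) as [H0|H0].
  - unfold C. rewrite H0, Rmult_0_l, cos_0. ring.
  - replace (Sa * Sa * (a * a)) with (sin (a * t) * sin (a * t)) by (unfold Sa; field; exact H0).
    assert (H1 := sin2_cos2 (a * t)). unfold Rsqr in H1. unfold C. lra.
Qed.

Definition line (x : vec) (i : nat) (t : R) : vec :=
  fun l => if Nat.eqb l i then x l + t else x l.

Lemma is_derive_line x i t l : is_derive (fun s => line x i s l) t (basis i l).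
Proof.
  unfold line, basis. destruct (Nat.eqb l i); [auto_derive; auto; ring|exact (is_derive_const (x l) t)].
Qed.

Lemma line_at_0 x i : line x i 0 = x.
Proof. apply functional_extensionality; intros l. unfold line. destruct (Nat.eqb l i); ring. Qed.

(** * Harmonic homogeneous polynomials on the sphere *)

Lemma sumR_phess_proj_basis d p x : sqnorm d x = 1 ->
  sumR d (fun i => phess d p x (proj d x (basis i)) (proj d x (basis i))) =
  sumR d (fun i => phess d p x (basis i) (basis i)) - phess d p x x x.
Proof.
  intros Hx.
  rewrite (sumR_ext _ _ (fun i => phess d p x (basis i) (basis i) - x i * phess d p x x (basis i)
                                 - x i * phess d p x (basis i) x + (x i * x i) * phess d p x x x)).
  - rewrite !sumR_add, !sumR_sub, sumR_phess_basis_l, sumR_phess_basis_r, sumR_mulr.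
    unfold sqnorm, dot in Hx. rewrite Hx. ring.
  - intros i Hi.
    rewrite (phess_ext d p x _ (fun l => basis i l - x i * x l) _ (fun l => basis i l - x i * x l))
      by (intros; now apply proj_basis).
    rewrite phess_sub_l, !phess_sub_r. ring.
Qed.

Lemma Derive_n_2_peval_geo d p x u : pvars_below d p ->
  Derive_n (fun t => peval (geo d x u t) p) 2 0 = - sqnorm d u * pdiff d p x x + phess d p x u u.
Proof.
  intros Hp.
  rewrite (Derive_n_2_peval_curve d p (geo d x u) (geo_vel d x u) (geo_acc d x u)), geo_at_0;
    [|exact Hp|intros; now apply is_derive_geo|intros; apply is_derive_geo_vel].
  rewrite (pdiff_ext _ _ _ _ (fun l => - sqnorm d u * x l)), pdiff_scal by (intros; apply geo_acc_at_0).
  f_equal. apply phess_ext; intros; apply geo_vel_at_0.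
Qed.

Lemma Derive_n_2_peval_line d p x i : pvars_below d p ->
  Derive_n (fun t => peval (line x i t) p) 2 0 = phess d p x (basis i) (basis i).
Proof.
  intros Hp.
  rewrite (Derive_n_2_peval_curve d p (line x i) (fun _ => basis i) (fun _ => vzero)), line_at_0;
    [|exact Hp|intros; apply is_derive_line|intros; exact (is_derive_const (basis i l) t)].
  rewrite pdiff_vzero. ring.
Qed.

Definition sphere_eigenvalue (d k : nat) : R := INR k * (INR k + INR d - 2).

Lemma sphere_lap_harmonic_hom_poly d k f x :
  is_hom_poly d k f -> is_harmonic d f -> sqnorm d x = 1 ->
  sumR d (fun i => Derive_n (fun t => f (geo d x (proj d x (basis i)) t)) 2 0)
  = - sphere_eigenvalue d k * f x.
Proof.
  intros Hf Hharm Hx. destruct (hom_poly_pterm d k f Hf) as [p [Hp [Hfp Hhom]]].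
  (* Σ_i (-|P e_i|^2 dp_x(x) + d^2p_x(P e_i, P e_i)) = -(d - 1) k p(x) + (Δp(x) - k (k - 1) p(x)) *)
  apply functional_extensionality in Hfp. subst f.
  assert (Htrace : sumR d (fun i => phess d p x (basis i) (basis i)) = 0).
  { rewrite <- (Hharm x). apply sumR_ext; intros i Hi.
    symmetry. exact (Derive_n_2_peval_line d p x i Hp). }
  rewrite (sumR_ext _ _ (fun i => (x i * x i - 1) * pdiff d p x x
                                 + phess d p x (proj d x (basis i)) (proj d x (basis i)))).
  - rewrite sumR_add, sumR_phess_proj_basis, Htrace, sumR_mulr, sumR_sub, sumR_const by exact Hx.
    unfold sqnorm, dot in Hx. rewrite Hx, (euler_pdiff d k p Hp Hhom), (euler_phess d k p Hp Hhom).
    unfold sphere_eigenvalue. ring.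
  - intros i Hi. rewrite Derive_n_2_peval_geo, sqnorm_proj_basis by assumption. ring.
Qed.

Lemma hom_poly_geo_twice_differentiable d k f x u :
  is_hom_poly d k f -> twice_differentiable (fun t => f (geo d x u t)).
Proof.
  intros Hf. destruct (hom_poly_pterm d k f Hf) as [p [Hp [Hfp _]]].
  apply functional_extensionality in Hfp. subst f.
  apply (peval_curve_twice_differentiable d p _ (geo_vel d x u) (geo_acc d x u) Hp);
    intros; [now apply is_derive_geo|apply is_derive_geo_vel].
Qed.

(** * Harmonic forms along geodesics *)

Definition vderive (P : R -> vec) (t : R) : vec := fun j => Derive (fun s => P s j) t.
Definition vderive2 (P : R -> vec) (t : R) : vec := fun j => Derive_n (fun s => P s j) 2 t.

Lemma vderive_geo_vzero d F x t : vderive (fun s => F (geo d x vzero s)) t = vzero.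
Proof.
  rewrite geo_vzero. apply functional_extensionality; intros j. apply (Derive_const (F x j)).
Qed.

Lemma vderive2_geo_vzero d F x t : vderive2 (fun s => F (geo d x vzero s)) t = vzero.
Proof.
  rewrite geo_vzero. apply functional_extensionality; intros j. apply (Derive_n_const 1 (F x j)).
Qed.

Section CurveOfConstantNorm.
Variables (n : nat) (P : R -> vec).
Hypothesis HP : forall j, (j < n)%nat -> twice_differentiable (fun t => P t j).

Lemma dot_vderive_sqnorm_const c :
  (forall t, sqnorm n (P t) = c) -> forall t, dot n (P t) (vderive P t) = 0.
Proof.
  intros Hc t.
  assert (H : is_derive (fun s => sqnorm n (P s)) t (2 * dot n (P t) (vderive P t))).
  { unfold sqnorm, dot. rewrite <- sumR_mull.
    apply (is_derive_sumR n (fun j s => P s j * P s j) (fun j s => 2 * (P s j * vderive P s j))).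
    intros j Hj. unfold vderive. assert (Hd := Derive_correct _ t (proj1 (HP j Hj) t)).
    replace (2 * _) with (Derive (fun s => P s j) t * P t j + P t j * Derive (fun s => P s j) t) by ring.
    exact (is_derive_mult (fun s => P s j) (fun s => P s j) t _ _ Hd Hd Rmult_comm). }
  assert (H0 : is_derive (fun s => sqnorm n (P s)) t 0).
  { apply (is_derive_ext (fun _ => c)); [intros; symmetry; apply Hc|exact (is_derive_const c t)]. }
  assert (E := is_derive_unique _ _ _ H). rewrite (is_derive_unique _ _ _ H0) in E. lra.
Qed.

Lemma dot_vderive2_of_dot_vderive :
  (forall t, dot n (P t) (vderive P t) = 0) ->
  forall t, dot n (P t) (vderive2 P t) = - sqnorm n (vderive P t).
Proof.
  intros H0 t.
  assert (H : is_derive (fun s => dot n (P s) (vderive P s)) t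
                (sqnorm n (vderive P t) + dot n (P t) (vderive2 P t))).
  { unfold sqnorm, dot. rewrite <- sumR_add.
    apply (is_derive_sumR n (fun j s => P s j * vderive P s j)
             (fun j s => vderive P s j * vderive P s j + P s j * vderive2 P s j)).
    intros j Hj. unfold vderive, vderive2.
    change (Derive_n (fun s => P s j) 2 t) with (Derive (Derive (fun s => P s j)) t).
    exact (is_derive_mult (fun s => P s j) (Derive (fun s => P s j)) t _ _
             (Derive_correct _ t (proj1 (HP j Hj) t)) (Derive_correct _ t (proj2 (HP j Hj) t))
             Rmult_comm). }
  assert (Hz : is_derive (fun s => dot n (P s) (vderive P s)) t 0).
  { apply (is_derive_ext (fun _ => 0)); [intros; symmetry; apply H0|exact (is_derive_const 0 t)]. }
  assert (E := is_derive_unique _ _ _ H). rewrite (is_derive_unique _ _ _ Hz) in E. lra.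
Qed.
End CurveOfConstantNorm.

Section HarmonicForm.
Variables (d n k : nat) (r : R) (F : vec -> vec).
Hypothesis HF : harmonic_form d n k F.
Hypothesis HFnorm : forall x, sqnorm n (F x) = r ^ 2 * sqnorm d x ^ k.

Lemma sqnorm_form_sphere x : sqnorm d x = 1 -> sqnorm n (F x) = r ^ 2.
Proof. intros Hx. rewrite HFnorm, Hx, pow1. ring. Qed.

Lemma dot_form_vderive_geo x u : sqnorm d x = 1 -> dot d x u = 0 ->
  forall t, dot n (F (geo d x u t)) (vderive (fun t => F (geo d x u t)) t) = 0.
Proof.
  intros Hx Hu. apply (dot_vderive_sqnorm_const n _ (fun j Hj => hom_poly_geo_twice_differentiable
                                                  d k _ x u (proj1 (HF j Hj))) (r ^ 2)).
  intros t. apply sqnorm_form_sphere, geo_on_sphere; assumption.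
Qed.

Lemma dot_form_vderive2_geo x u : sqnorm d x = 1 -> dot d x u = 0 ->
  dot n (F x) (vderive2 (fun t => F (geo d x u t)) 0)
  = - sqnorm n (vderive (fun t => F (geo d x u t)) 0).
Proof.
  intros Hx Hu. rewrite <- (geo_at_0 d x u) at 1.
  apply (dot_vderive2_of_dot_vderive n _ (fun j Hj => hom_poly_geo_twice_differentiable
                                            d k _ x u (proj1 (HF j Hj)))).
  now apply dot_form_vderive_geo.
Qed.

Lemma sphere_lap_form x j : sqnorm d x = 1 -> (j < n)%nat ->
  sumR d (fun i => vderive2 (fun t => F (geo d x (proj d x (basis i)) t)) 0 j)
  = - sphere_eigenvalue d k * F x j.
Proof.
  intros Hx Hj. destruct (HF j Hj) as [Hpoly Hharm].
  exact (sphere_lap_harmonic_hom_poly d k (fun y => F y j) x Hpoly Hharm Hx).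
Qed.

(* Differentiating |F|^2 = r^2 twice along each geodesic turns the energy into
   -<F, Laplacian of F>, and F is an eigenfunction of the spherical Laplacian. *)
Lemma sumR_sqnorm_vderive_form x : sqnorm d x = 1 ->
  sumR d (fun i => sqnorm n (vderive (fun t => F (geo d x (proj d x (basis i)) t)) 0))
  = sphere_eigenvalue d k * r ^ 2.
Proof.
  intros Hx.
  rewrite (sumR_ext _ _ (fun i => -1 * dot n (F x) (vderive2 (fun t => F (geo d x (proj d x (basis i)) t)) 0))).
  2:{ intros i Hi. rewrite dot_form_vderive2_geo by (auto using dot_proj). unfold vderive. ring. }
  rewrite sumR_mull. unfold dot. rewrite sumR_swap.
  rewrite (sumR_ext _ _ (fun j => - sphere_eigenvalue d k * (F x j * F x j))).
  2:{ intros j Hj. rewrite sumR_mull, sphere_lap_form by assumption. ring. }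
  rewrite sumR_mull. change (sumR n (fun j => F x j * F x j)) with (sqnorm n (F x)).
  rewrite sqnorm_form_sphere by exact Hx. ring.
Qed.

Lemma energy_density_form x : sqnorm d x = 1 ->
  energy_density d n F x = / 2 * (sphere_eigenvalue d k * r ^ 2).
Proof. intros Hx. unfold energy_density. f_equal. exact (sumR_sqnorm_vderive_form x Hx). Qed.
End HarmonicForm.

(** * The product map *)

(* [prod_map n1 F1 F2 x y] is convertible to [vcat n1 (F1 x) (F2 y)]. *)
Definition vcat (n1 : nat) (p q : vec) : vec :=
  fun j => if Nat.ltb j (S n1) then p j else q (j - S n1)%nat.

Lemma dot_vcat n1 n2 p q p' q' :
  dot (n1 + n2 + 2) (vcat n1 p q) (vcat n1 p' q') = dot (S n1) p p' + dot (S n2) q q'.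
Proof.
  unfold dot. replace (n1 + n2 + 2)%nat with (S n1 + S n2)%nat by lia. rewrite sumR_split.
  f_equal; apply sumR_ext; intros j Hj; unfold vcat.
  - now destruct (Nat.ltb_spec j (S n1)); [|lia].
  - destruct (Nat.ltb_spec (S n1 + j) (S n1)); [lia|]. now replace (S n1 + j - S n1)%nat with j by lia.
Qed.

(* When the derivative [A] of the section [T] is tangent along [Γ], the inner projection in
   the second covariant derivative does nothing. *)
Lemma proj_Derive_proj_tangent N (Γ T A : R -> vec) z :
  (forall t j, (j < N)%nat -> Derive (fun s => T s j) t = A t j) ->
  (forall t, dot N (Γ t) (A t) = 0) ->
  forall j, (j < N)%nat ->
  proj N z (fun j => Derive (fun t => proj N (Γ t) (fun j => Derive (fun s => T s j) t) j) 0) j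
  = proj N z (vderive A 0) j.
Proof.
  intros HT HA.
  assert (E : forall j, (j < N)%nat ->
            Derive (fun t => proj N (Γ t) (fun j => Derive (fun s => T s j) t) j) 0 = vderive A 0 j).
  { intros j Hj. apply Derive_ext; intros t. unfold proj.
    rewrite (dot_ext N _ (Γ t) _ (A t)), HA, HT by auto. ring. }
  intros j Hj. now apply proj_ext.
Qed.

Section ProductMap.
Variables (d1 d2 n1 n2 k1 k2 : nat) (r1 r2 : R) (F1 F2 : vec -> vec).
Hypothesis HF1 : harmonic_form d1 (S n1) k1 F1.
Hypothesis HF2 : harmonic_form d2 (S n2) k2 F2.
Hypothesis HF1norm : forall x, sqnorm (S n1) (F1 x) = r1 ^ 2 * sqnorm d1 x ^ k1.
Hypothesis HF2norm : forall y, sqnorm (S n2) (F2 y) = r2 ^ 2 * sqnorm d2 y ^ k2.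
Hypothesis Hr : r1 ^ 2 + r2 ^ 2 = 1.

Local Notation N := (n1 + n2 + 2)%nat.
Local Notation Phi := (prod_map n1 F1 F2).
Local Notation lam1 := (sphere_eigenvalue d1 k1).
Local Notation lam2 := (sphere_eigenvalue d2 k2).
Local Notation a1 := ((lam2 - lam1) * r2 ^ 2).
Local Notation a2 := ((lam1 - lam2) * r1 ^ 2).
Local Notation dF1 x u := (vderive (fun t => F1 (geo d1 x u t)) 0).
Local Notation dF2 y v := (vderive (fun t => F2 (geo d2 y v t)) 0).
Local Notation ddF1 x u := (vderive2 (fun t => F1 (geo d1 x u t)) 0).
Local Notation ddF2 y v := (vderive2 (fun t => F2 (geo d2 y v t)) 0).

Lemma trM_Derive_n_2_prod_map x y j :
  trM d1 d2 x y (fun u v j => Derive_n (fun t => Phi (geo d1 x u t) (geo d2 y v t) j) 2 0) j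
  = vcat n1 (fun j => sumR d1 (fun i => ddF1 x (proj d1 x (basis i)) j))
            (fun j => sumR d2 (fun i => ddF2 y (proj d2 y (basis i)) j)) j.
Proof.
  unfold trM, prod_map, vcat. rewrite !geo_vzero. cbv beta.
  destruct (Nat.ltb j (S n1)).
  - rewrite (sumR_ext d2 _ (fun _ => 0)), sumR_0, Rplus_0_r by (intros; apply (Derive_n_const 1)).
    reflexivity.
  - rewrite (sumR_ext d1 _ (fun _ => 0)), sumR_0, Rplus_0_l by (intros; apply (Derive_n_const 1)).
    reflexivity.
Qed.

Lemma tension_prod_map x y j : sqnorm d1 x = 1 -> sqnorm d2 y = 1 -> (j < N)%nat ->
  tension N d1 d2 Phi x y j = vcat n1 (fun j => a1 * F1 x j) (fun j => a2 * F2 y j) j.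
Proof.
  intros Hx Hy Hj. unfold tension, proj.
  set (L := vcat n1 (fun j => - lam1 * F1 x j) (fun j => - lam2 * F2 y j)).
  assert (HL : forall j, (j < N)%nat ->
            trM d1 d2 x y (fun u v j => Derive_n (fun t => Phi (geo d1 x u t) (geo d2 y v t) j) 2 0) j
            = L j).
  { intros j' Hj'. rewrite trM_Derive_n_2_prod_map. unfold L, vcat. destruct (Nat.ltb_spec j' (S n1)).
    - now apply (sphere_lap_form d1 (S n1) k1 F1 HF1).
    - apply (sphere_lap_form d2 (S n2) k2 F2 HF2); [exact Hy|lia]. }
  rewrite (dot_ext N _ (Phi x y) _ L), HL by auto. unfold L. change (Phi x y) with (vcat n1 (F1 x) (F2 y)).
  rewrite dot_vcat, !dot_scal_r.
  change (dot (S n1) (F1 x) (F1 x)) with (sqnorm (S n1) (F1 x)).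
  change (dot (S n2) (F2 y) (F2 y)) with (sqnorm (S n2) (F2 y)).
  rewrite (sqnorm_form_sphere d1 (S n1) k1 r1 F1 HF1norm x Hx), (sqnorm_form_sphere d2 (S n2) k2 r2 F2 HF2norm y Hy).
  unfold vcat. destruct (Nat.ltb j (S n1)).
  - replace (r1 ^ 2) with (1 - r2 ^ 2) by lra. ring.
  - replace (r2 ^ 2) with (1 - r1 ^ 2) by lra. ring.
Qed.

Lemma hess_sec_tension_prod_map x y u v j :
  sqnorm d1 x = 1 -> sqnorm d2 y = 1 -> dot d1 x u = 0 -> dot d2 y v = 0 -> (j < N)%nat ->
  hess_sec N d1 d2 Phi (tension N d1 d2 Phi) x y u v j
  = vcat n1
      (fun j => a1 * ddF1 x u j + (a1 * sqnorm (S n1) (dF1 x u) + a2 * sqnorm (S n2) (dF2 y v)) * F1 x j)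
      (fun j => a2 * ddF2 y v j + (a1 * sqnorm (S n1) (dF1 x u) + a2 * sqnorm (S n2) (dF2 y v)) * F2 y j) j.
Proof.
  intros Hx Hy Hu Hv Hj.
  pose (A := fun t => vcat n1 (fun j => a1 * vderive (fun t => F1 (geo d1 x u t)) t j)
                              (fun j => a2 * vderive (fun t => F2 (geo d2 y v t)) t j)).
  unfold hess_sec. cbv zeta.
  etransitivity; [apply (proj_Derive_proj_tangent N (fun t => Phi (geo d1 x u t) (geo d2 y v t))
                    (fun s => tension N d1 d2 Phi (geo d1 x u s) (geo d2 y v s)) A); [| |exact Hj]|].
  - intros t j' Hj'.
    rewrite (Derive_ext _ (fun s => vcat n1 (fun j => a1 * F1 (geo d1 x u s) j)
                                           (fun j => a2 * F2 (geo d2 y v s) j) j'))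
      by (intros; apply tension_prod_map; auto using geo_on_sphere).
    unfold A, vcat. destruct (Nat.ltb j' (S n1)); apply Derive_scal.
  - intros t. change (Phi ?a ?b) with (vcat n1 (F1 a) (F2 b)). unfold A.
    rewrite dot_vcat, !dot_scal_r, (dot_form_vderive_geo d1 (S n1) k1 r1 F1 HF1 HF1norm),
      (dot_form_vderive_geo d2 (S n2) k2 r2 F2 HF2 HF2norm) by assumption. ring.
  - assert (HA : forall j, vderive A 0 j = vcat n1 (fun j => a1 * ddF1 x u j) (fun j => a2 * ddF2 y v j) j).
    { intros j'. unfold vderive at 1. unfold A, vcat. destruct (Nat.ltb j' (S n1)); apply Derive_scal. }
    unfold proj. rewrite HA, (dot_ext N _ (Phi x y) _ _ (fun _ _ => eq_refl) (fun j _ => HA j)).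
    change (Phi x y) with (vcat n1 (F1 x) (F2 y)).
    rewrite dot_vcat, !dot_scal_r, (dot_form_vderive2_geo d1 (S n1) k1 r1 F1 HF1 HF1norm),
      (dot_form_vderive2_geo d2 (S n2) k2 r2 F2 HF2 HF2norm) by assumption.
    unfold vcat. destruct (Nat.ltb j (S n1)); ring.
Qed.

Lemma dmap_prod_map x y u v j : dmap d1 d2 Phi x y u v j = vcat n1 (dF1 x u) (dF2 y v) j.
Proof. unfold dmap, prod_map, vcat. now destruct (Nat.ltb j (S n1)). Qed.

Lemma curv_trace_prod_map x y j : sqnorm d1 x = 1 -> sqnorm d2 y = 1 -> (j < N)%nat ->
  curv_trace N d1 d2 Phi x y j = - (lam1 * r1 ^ 2 + lam2 * r2 ^ 2) * tension N d1 d2 Phi x y j.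
Proof.
  intros Hx Hy Hj.
  assert (Htau : forall j, (j < N)%nat ->
            tension N d1 d2 Phi x y j = vcat n1 (fun j => a1 * F1 x j) (fun j => a2 * F2 y j) j)
    by (intros; now apply tension_prod_map).
  set (tau := tension N d1 d2 Phi x y) in *.
  assert (Hterm : forall u v, dot d1 x u = 0 -> dot d2 y v = 0 ->
            dot N tau (dmap d1 d2 Phi x y u v) * dmap d1 d2 Phi x y u v j
            - sqnorm N (dmap d1 d2 Phi x y u v) * tau j
            = - (sqnorm (S n1) (dF1 x u) + sqnorm (S n2) (dF2 y v)) * tau j).
  { intros u v Hu Hv. unfold sqnorm.
    rewrite (dot_ext N tau _ _ _ Htau (fun j _ => dmap_prod_map x y u v j)),
      (dot_ext N _ _ _ _ (fun j _ => dmap_prod_map x y u v j) (fun j _ => dmap_prod_map x y u v j)).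
    rewrite !dot_vcat, !dot_scal_l.
    pose proof (dot_form_vderive_geo d1 (S n1) k1 r1 F1 HF1 HF1norm x u Hx Hu 0) as H1.
    pose proof (dot_form_vderive_geo d2 (S n2) k2 r2 F2 HF2 HF2norm y v Hy Hv 0) as H2.
    rewrite geo_at_0 in H1, H2. rewrite H1, H2. ring. }
  unfold curv_trace, trM. cbv zeta. fold tau.
  rewrite (sumR_ext d1 _ (fun i => - (sqnorm (S n1) (dF1 x (proj d1 x (basis i)))
                                       + sqnorm (S n2) (dF2 y vzero)) * tau j)),
          (sumR_ext d2 _ (fun i => - (sqnorm (S n1) (dF1 x vzero)
                                       + sqnorm (S n2) (dF2 y (proj d2 y (basis i)))) * tau j))
    by (intros; apply Hterm; auto using dot_proj, dot_vzero_r).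
  rewrite !vderive_geo_vzero, !sqnorm_vzero, !sumR_mulr.
  rewrite (sumR_ext d1 _ (fun i => -1 * sqnorm (S n1) (dF1 x (proj d1 x (basis i))))) by (intros; ring).
  rewrite (sumR_ext d2 _ (fun i => -1 * sqnorm (S n2) (dF2 y (proj d2 y (basis i))))) by (intros; ring).
  rewrite !sumR_mull, (sumR_sqnorm_vderive_form d1 (S n1) k1 r1 F1 HF1 HF1norm),
    (sumR_sqnorm_vderive_form d2 (S n2) k2 r2 F2 HF2 HF2norm) by assumption.
  ring.
Qed.

Lemma bitension_prod_map x y j : sqnorm d1 x = 1 -> sqnorm d2 y = 1 -> (j < N)%nat ->
  bitension N d1 d2 Phi x y j
  = vcat n1 (fun j => (lam1 - lam2) ^ 2 * r2 ^ 2 * (r2 ^ 2 - r1 ^ 2) * F1 x j)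
            (fun j => (lam1 - lam2) ^ 2 * r1 ^ 2 * (r1 ^ 2 - r2 ^ 2) * F2 y j) j.
Proof.
  intros Hx Hy Hj. unfold bitension, rough_lap, trM.
  rewrite curv_trace_prod_map, tension_prod_map by assumption.
  rewrite (sumR_ext d1 _ (fun i => vcat n1 _ _ j)), (sumR_ext d2 _ (fun i => vcat n1 _ _ j))
    by (intros; apply hess_sec_tension_prod_map; auto using dot_proj, dot_vzero_r).
  rewrite !vderive_geo_vzero, !vderive2_geo_vzero, !sqnorm_vzero.
  unfold vcat, vzero. destruct (Nat.ltb_spec j (S n1)).
  - repeat rewrite ?sumR_add, ?sumR_mull, ?sumR_mulr.
    rewrite (sphere_lap_form d1 (S n1) k1 F1 HF1), (sumR_sqnorm_vderive_form d1 (S n1) k1 r1 F1 HF1 HF1norm),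
      (sumR_sqnorm_vderive_form d2 (S n2) k2 r2 F2 HF2 HF2norm), !sumR_0 by assumption.
    replace (r1 ^ 2) with (1 - r2 ^ 2) by lra. ring.
  - repeat rewrite ?sumR_add, ?sumR_mull, ?sumR_mulr.
    rewrite (sphere_lap_form d2 (S n2) k2 F2 HF2), (sumR_sqnorm_vderive_form d1 (S n1) k1 r1 F1 HF1 HF1norm),
      (sumR_sqnorm_vderive_form d2 (S n2) k2 r2 F2 HF2 HF2norm), !sumR_0 by (assumption || lia).
    replace (r2 ^ 2) with (1 - r1 ^ 2) by lra. ring.
Qed.

Lemma proper_biharmonic_prod_map_iff : (0 < d1)%nat -> (0 < d2)%nat -> 0 < r1 -> 0 < r2 ->
  proper_biharmonic N d1 d2 Phi <-> lam1 <> lam2 /\ r1 ^ 2 = r2 ^ 2.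
Proof.
  intros Hd1 Hd2 Hr1 Hr2.
  assert (Hx0 : sqnorm d1 (basis 0) = 1) by now apply sqnorm_basis.
  assert (Hy0 : sqnorm d2 (basis 0) = 1) by now apply sqnorm_basis.
  destruct (sqnorm_neq0_coord (S n1) (F1 (basis 0))) as [j1 [Hj1 Hf1]].
  { rewrite (sqnorm_form_sphere d1 (S n1) k1 r1 F1 HF1norm _ Hx0). apply pow_nonzero. lra. }
  assert (Hr2sq : r2 ^ 2 <> 0) by (apply pow_nonzero; lra).
  unfold proper_biharmonic, on_sphere. split.
  - intros [Hbi [x [y [Hx [Hy [j [Hj Ht]]]]]]].
    assert (Hlam : lam1 <> lam2).
    { intros E. apply Ht. rewrite tension_prod_map, E by assumption.
      unfold vcat. destruct (Nat.ltb j (S n1)); ring. }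
    split; [exact Hlam|].
    assert (Hb := Hbi _ _ Hx0 Hy0 j1 ltac:(lia)).
    rewrite bitension_prod_map in Hb by (assumption || lia).
    unfold vcat in Hb. destruct (Nat.ltb_spec j1 (S n1)); [|lia].
    apply Rmult_integral in Hb as [Hb|Hb]; [|contradiction].
    apply Rmult_integral in Hb as [Hb|Hb]; [|lra].
    apply Rmult_integral in Hb as [Hb|Hb]; [|contradiction].
    exfalso. apply (pow_nonzero (lam1 - lam2) 2); [intros E; apply Hlam; lra|exact Hb].
  - intros [Hlam Hr12]. split.
    + intros x y Hx Hy j Hj. rewrite bitension_prod_map, Hr12 by assumption.
      unfold vcat. destruct (Nat.ltb j (S n1)); ring.
    + exists (basis 0), (basis 0). split; [exact Hx0|]. split; [exact Hy0|].
      exists j1. split; [lia|]. rewrite tension_prod_map by (assumption || lia).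
      unfold vcat. destruct (Nat.ltb_spec j1 (S n1)); [|lia].
      apply Rmult_integral_contrapositive_currified; [|exact Hf1].
      apply Rmult_integral_contrapositive_currified; [|exact Hr2sq].
      intros E. apply Hlam. lra.
Qed.
End ProductMap.

Lemma inv_sqrt2_iff r : 0 < r -> (r = / sqrt 2 <-> r ^ 2 = / 2).
Proof.
  intros Hr. assert (Hs : 0 < sqrt 2) by (apply sqrt_lt_R0; lra).
  assert (Hs2 : sqrt 2 * sqrt 2 = 2) by (apply sqrt_sqrt; lra).
  split.
  - intros ->. replace ((/ sqrt 2) ^ 2) with (/ (sqrt 2 * sqrt 2)) by (field; lra). now rewrite Hs2.
  - intros H. assert (E : (r * sqrt 2) * (r * sqrt 2) = 1).
    { replace ((r * sqrt 2) * (r * sqrt 2)) with (r ^ 2 * (sqrt 2 * sqrt 2)) by ring.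
      rewrite H, Hs2. field. }
    assert (E1 : r * sqrt 2 = 1) by nra.
    apply (Rmult_eq_reg_r (sqrt 2)); [rewrite E1; field|]; lra.
Qed.

Theorem mainTheorem12 (m1 m2 n1 n2 k1 k2 : nat) (r1 r2 : R)
  (F1 F2 : vec -> vec) :
  (1 <= m1)%nat -> (1 <= m2)%nat ->
  0 < r1 -> 0 < r2 -> r1 ^ 2 + r2 ^ 2 = 1 ->
  harmonic_form (S m1) (S n1) k1 F1 ->
  harmonic_form (S m2) (S n2) k2 F2 ->
  (forall x, sqnorm (S n1) (F1 x) = r1 ^ 2 * (sqnorm (S m1) x) ^ k1) ->
  (forall y, sqnorm (S n2) (F2 y) = r2 ^ 2 * (sqnorm (S m2) y) ^ k2) ->
  (proper_biharmonic (n1 + n2 + 2) (S m1) (S m2) (prod_map n1 F1 F2) <->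
   (r1 = / sqrt 2 /\ r2 = / sqrt 2 /\
    exists x y, on_sphere (S m1) x /\ on_sphere (S m2) y /\
      energy_density (S m1) (S n1) F1 x <> energy_density (S m2) (S n2) F2 y)).
Proof.
  intros _ _ Hr1 Hr2 Hr HF1 HF2 HF1norm HF2norm.
  rewrite (proper_biharmonic_prod_map_iff (S m1) (S m2) n1 n2 k1 k2 r1 r2 F1 F2
             HF1 HF2 HF1norm HF2norm Hr), (inv_sqrt2_iff r1 Hr1), (inv_sqrt2_iff r2 Hr2) by (lia || lra).
  unfold on_sphere.
  assert (He : forall x y, sqnorm (S m1) x = 1 -> sqnorm (S m2) y = 1 ->
             energy_density (S m1) (S n1) F1 x = / 2 * (sphere_eigenvalue (S m1) k1 * r1 ^ 2) /\
             energy_density (S m2) (S n2) F2 y = / 2 * (sphere_eigenvalue (S m2) k2 * r2 ^ 2)).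
  { intros x y Hx Hy. split; apply energy_density_form; assumption. }
  split.
  - intros [Hlam Hr12]. assert (Hhalf : r1 ^ 2 = / 2) by lra.
    split; [exact Hhalf|]. split; [lra|].
    assert (Hx0 : sqnorm (S m1) (basis 0) = 1) by (apply sqnorm_basis; lia).
    assert (Hy0 : sqnorm (S m2) (basis 0) = 1) by (apply sqnorm_basis; lia).
    exists (basis 0), (basis 0). split; [exact Hx0|]. split; [exact Hy0|].
    destruct (He _ _ Hx0 Hy0) as [-> ->]. rewrite <- Hr12, Hhalf. intros E. apply Hlam. lra.
  - intros [H1 [H2 [x [y [Hx [Hy Hne]]]]]]. split; [|lra].
    intros E. apply Hne. destruct (He _ _ Hx Hy) as [-> ->]. now rewrite E, H1, H2.
Qed.
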